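(* Let $(V,\mathrm d)$ and $(V_h,\mathrm d_h)$ be the domain complexes of closed Hilbert complexes $(W,\mathrm d)$ and $(W_h,\mathrm d_h)$ respectively, with morphisms $i_h\colon V_h\to V$ and $\pi_h\colon V\to V_h$ such that $\pi_h^k\circ i_h^k=\mathrm{id}_{V_h^k}$ for each $k$. Let $c_P$ be a constant such that $\|v\|_V\le c_P\|\mathrm d^kv\|_V$ for all $v\in(\mathfrak Z^k)^{\perp}$. Then \[\|v_h\|_{V_h}\le c_P\,\|\pi_h^k\|\,\|i_h^{k+1}\|\,\|\mathrm d_hv_h\|_h\quad\text{for all } v_h\in(\mathfrak Z_h^k)^{\perp},\] where $\|\cdot\|_h$ is the norm of $W_h^{k+1}$.
   Context: A Hilbert complex $(W,\mathrm d)$ is a sequence of Hilbert spaces $W^k$ with closed densely defined linear maps $\mathrm d^k\colon V^k\subset W^k\to V^{k+1}\subset W^{k+1}$ satisfying $\mathrm d^k\circ\mathrm d^{k-1}=0$; it is closed if each $\mathrm d^kV^k$ is closed in $W^{k+1}$. Its domain complex $(V,\mathrm d)$ consists of the domains $V^k$ with the graph inner product $\langle u,v\rangle_V=\langle u,v\rangle_{W}+\langle\mathrm d u,\mathrm d v\rangle_{W}$, and is a bounded Hilbert complex. A morphism $f\colon V\to V'$ of domain complexes is a sequence of bounded linear maps $f^k\colon V^k\to V'^k$ with $\mathrm d'^kf^k=f^{k+1}\mathrm d^k$. $\mathfrak Z^k=\ker\mathrm d^k$ and $\mathfrak Z_h^k=\ker\mathrm d_h^k$, with orthogonal complements taken in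 $V^k$ and $V_h^k$ respectively. Operator norms $\|\pi_h^k\|$, $\|i_h^{k+1}\|$ are with respect to the $V$ and $V_h$ norms. *)

From HB Require Import structures.
From mathcomp Require Import all_boot all_order all_algebra.
From mathcomp Require Import all_classical all_reals all_analysis.
Set Implicit Arguments. Unset Strict Implicit. Unset Printing Implicit Defensive.
Import Order.TTheory GRing.Theory Num.Theory.
Import numFieldNormedType.Exports.
Local Open Scope classical_set_scope.
Local Open Scope ring_scope.

(* Raw data of a (real) Hilbert complex indexed by nat:
   spaces W^k (complete normed spaces carrying an inner product),
   domains V^k ⊂ W^k, and operators d^k : V^k -> W^{k+1}
   (represented as total functions; only their values on V^k matter). *)
Record hcomplex (R : realType) := HComplex {
  hc_W : nat -> completeNormedModType R;
  hc_ip : forall k, hc_W k -> hc_W k -> R;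
  hc_dom : forall k, set (hc_W k);
  hc_d : forall k, hc_W k -> hc_W k.+1 }.

Arguments hc_ip {R} _ {k}.
Arguments hc_d {R} _ {k}.
Arguments hc_dom {R} _ _.
Arguments hc_W {R} _ _.

Definition is_inner_product (R : realType) (X : normedModType R)
  (ip : X -> X -> R) : Prop :=
  [/\ forall x y, ip x y = ip y x,
      forall x y z, ip (x + y) z = ip x z + ip y z,
      forall (a : R) x y, ip (a *: x) y = a * ip x y
    & forall x, ip x x = `|x| ^+ 2].

Definition is_subspace (R : realType) (X : normedModType R) (S : set X) : Prop :=
  [/\ S 0, forall x y, S x -> S y -> S (x + y)
    & forall (a : R) x, S x -> S (a *: x)].

Definition closed_hilbert_complex (R : realType) (C : hcomplex R) : Prop :=
  forall k,
  [/\ is_inner_product (hc_ip C (k:=k)),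
      is_subspace (hc_dom C k) &
      [/\ (forall (a : R) x y, hc_dom C k x -> hc_dom C k y ->
          hc_d C (a *: x + y) = a *: hc_d C x + hc_d C y),
      closure (hc_dom C k) = setT,
      closed [set xy : (hc_W C k * hc_W C k.+1)%type |
                 hc_dom C k xy.1 /\ xy.2 = hc_d C xy.1] &
      [/\ (forall x, hc_dom C k x -> hc_dom C k.+1 (hc_d C x)),
      (forall x, hc_dom C k x -> hc_d C (hc_d C x) = 0) &
      closed (hc_d C @` hc_dom C k)]]].

(* graph inner product and norm of the domain complex V *)
Definition Vip (R : realType) (C : hcomplex R) (k : nat) (u v : hc_W C k) : R :=
  hc_ip C u v + hc_ip C (hc_d C u) (hc_d C v).

Definition Vnorm (R : realType) (C : hcomplex R) (k : nat) (u : hc_W C k) : R :=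
  Num.sqrt (Vip u u).

Definition Zk (R : realType) (C : hcomplex R) (k : nat) : set (hc_W C k) :=
  [set z | hc_dom C k z /\ hc_d C z = 0].

Arguments Zk {R} C k.

Definition Zperp (R : realType) (C : hcomplex R) (k : nat) : set (hc_W C k) :=
  [set v | hc_dom C k v /\ forall z, Zk C k z -> Vip v z = 0].

Arguments Zperp {R} C k.

Definition dc_morphism (R : realType) (C C' : hcomplex R)
  (f : forall k, hc_W C k -> hc_W C' k) : Prop :=
  forall k,
  [/\ forall v, hc_dom C k v -> hc_dom C' k (f k v),
      (forall (a : R) x y, hc_dom C k x -> hc_dom C k y ->
          f k (a *: x + y) = a *: f k x + f k y),
      (exists M : R, forall v, hc_dom C k v ->
          Vnorm (f k v) <= M * Vnorm v)
    & forall v, hc_dom C k v -> hc_d C' (f k v) = f k.+1 (hc_d C v)].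

Definition opnorm (R : realType) (C C' : hcomplex R)
  (f : forall k, hc_W C k -> hc_W C' k) (k : nat) : R :=
  sup [set Vnorm (f k v) | v in [set v | hc_dom C k v /\ Vnorm v <= 1]].

(* Lift v_h to i_h v_h in V^k and replace it by its component w orthogonal to
   Z^k (an orthogonal projection in the Hilbert space W^k onto the closed
   subspace Z^k); w has the same differential i_h (d_h v_h), so the Poincare
   inequality bounds it by c_P |i_h^{k+1}| |d_h v_h|.  Since d_h (pi_h w) =
   d_h v_h and v_h is orthogonal to Z_h^k, v_h is the element of smallest
   V_h-norm with that differential, hence |v_h| <= |pi_h w| <= |pi_h^k| |w|. *)

From HB Require Import structures.
From mathcomp Require Import all_boot all_order all_algebra.
From mathcomp Require Import all_classical all_reals all_analysis.
From mathcomp Require Import ring lra.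
Set Implicit Arguments. Unset Strict Implicit. Unset Printing Implicit Defensive.
Import Order.TTheory GRing.Theory Num.Theory.
Import numFieldNormedType.Exports.
Local Open Scope classical_set_scope.
Local Open Scope ring_scope.

Section InnerProduct.
Variables (R : realType) (X : normedModType R) (ip : X -> X -> R).
Hypothesis hip : is_inner_product ip.

Lemma ipC x y : ip x y = ip y x. Proof. by case: hip. Qed.
Lemma ipDl x y z : ip (x + y) z = ip x z + ip y z. Proof. by case: hip. Qed.
Lemma ipZl (a : R) x y : ip (a *: x) y = a * ip x y. Proof. by case: hip. Qed.
Lemma ip_norm x : ip x x = `|x| ^+ 2. Proof. by case: hip. Qed.

Lemma ipDr x y z : ip x (y + z) = ip x y + ip x z.
Proof. by rewrite ipC ipDl !(ipC x). Qed.

Lemma ipZr (a : R) x y : ip x (a *: y) = a * ip x y.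
Proof. by rewrite ipC ipZl ipC. Qed.

Lemma ip0r x : ip x 0 = 0.
Proof. by rewrite -(scale0r 0) ipZr mul0r. Qed.

Lemma ipBl x y z : ip (x - y) z = ip x z - ip y z.
Proof. by rewrite -scaleN1r ipDl ipZl mulN1r. Qed.

Lemma ipBr x y z : ip x (y - z) = ip x y - ip x z.
Proof. by rewrite ipC ipBl !(ipC x). Qed.

Lemma normBZ_sqr (x y : X) (t : R) :
  `|x - t *: y| ^+ 2 = `|x| ^+ 2 - 2 * t * ip x y + t ^+ 2 * `|y| ^+ 2.
Proof. by rewrite -!ip_norm ipBl !ipBr !ipZl !ipZr (ipC y x) expr2; lra. Qed.

Lemma parallelogram (x y : X) :
  `|x - y| ^+ 2 + `|x + y| ^+ 2 = 2 * `|x| ^+ 2 + 2 * `|y| ^+ 2.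
Proof. by rewrite -!ip_norm ipBl !ipBr ipDl !ipDr (ipC y x); lra. Qed.

End InnerProduct.

Lemma quadratic_ge0_coef1_eq0 (R : realFieldType) (a c : R) : 0 <= c ->
  (forall t, 0 <= - 2 * t * a + t ^+ 2 * c) -> a = 0.
Proof.
move=> c0 ht.
pose s := (c + 1)^-1.
have s0 : 0 < s by rewrite invr_gt0; lra.
have sc : s * c = 1 - s.
  have : s * (c + 1) = 1 by rewrite mulVf //; lra.
  by rewrite mulrDr mulr1; lra.
have h : 0 <= s * (a ^+ 2 * (1 - s) - 2 * a ^+ 2).
  by rewrite -sc; move: (ht (a * s)); congr (_ <= _); ring.
rewrite pmulr_rge0 // in h.
have h2 : 0 <= s * a ^+ 2 by rewrite mulr_ge0 ?sqr_ge0 // ltW.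
have : a ^+ 2 <= 0 by move: h h2; move: (a ^+ 2) => A; nra.
by move=> ha; apply/eqP; rewrite -sqrf_eq0 eq_le sqr_ge0 andbT.
Qed.

Section OrthogonalProjection.
Variables (R : realType) (W : completeNormedModType R) (ip : W -> W -> R).
Hypothesis hip : is_inner_product ip.
Variable Z : set W.
Hypotheses (Zsub : is_subspace Z) (Zcl : closed Z).
Variable u : W.

Let dist2 := inf [set `|u - z| ^+ 2 | z in Z].

Let dist2_set0 : [set `|u - z| ^+ 2 | z in Z] !=set0.
Proof. by case: Zsub => Z0 _ _; exists (`|u - 0| ^+ 2), 0. Qed.

Lemma dist2_le z : Z z -> dist2 <= `|u - z| ^+ 2.
Proof.
move=> Zz; apply: ge_inf; last by exists z.
by exists 0 => _ [y _ <-]; exact: sqr_ge0.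
Qed.

Lemma dist2_approx (n : nat) :
  exists z, Z z /\ `|u - z| ^+ 2 < dist2 + n.+1%:R^-1.
Proof.
have : dist2 < dist2 + n.+1%:R^-1 by rewrite ltrDl invr_gt0 ltr0n.
by move=> /(inf_lt dist2_set0) [_ [z Zz <-] lt]; exists z.
Qed.

Lemma normB_sqr_le_excess x y : Z x -> Z y ->
  `|x - y| ^+ 2 <= 2 * (`|u - x| ^+ 2 - dist2) + 2 * (`|u - y| ^+ 2 - dist2).
Proof.
case: Zsub => _ ZD ZZ Zx Zy.
(* the midpoint of x and y lies in Z, hence at squared distance >= dist2 from u *)
have := parallelogram hip (u - y) (u - x).
have -> : (u - y) - (u - x) = x - y by rewrite opprB addrC addrA subrK.
have -> : (u - y) + (u - x) = 2 *: (u - 2^-1 *: (y + x)).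
  rewrite scalerBr scalerA mulrV ?unitfE ?pnatr_eq0 // scale1r.
  by rewrite scaler_nat mulr2n opprD !addrA; congr (_ + _); rewrite addrAC.
rewrite normrZ ger0_norm // exprMn (_ : 2 ^+ 2 = 4 :> R); last by rewrite expr2; lra.
have := dist2_le (ZZ 2^-1 _ (ZD _ _ Zy Zx)); lra.
Qed.

Lemma minimizing_cvg (zs : nat -> W) : (forall n, Z (zs n)) ->
  (forall n, `|u - zs n| ^+ 2 < dist2 + n.+1%:R^-1) -> cvg (zs @ \oo).
Proof.
move=> Zzs hzs; apply/cauchy_cvgP/cauchy_exP => e e0.
have [N hN] : exists N : nat, 0 + N.+1%:R^-1 < e ^+ 2 / 4.
  by apply: ltr_add_invr; rewrite divr_gt0 // exprn_gt0.
exists (zs N); exists N => // n /= Nn.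
rewrite -ball_normE /ball_ /=.
have hNn := normB_sqr_le_excess (Zzs N) (Zzs n).
have := hzs N; have := hzs n.
have : n.+1%:R^-1 <= N.+1%:R^-1 :> R by rewrite lef_pV2 ?posrE // ler_nat.
move: (n.+1%:R^-1) (N.+1%:R^-1) hN hNn => a b hN hNn ab hn hN'.
have hx : `|zs N - zs n| ^+ 2 < e ^+ 2 by lra.
by rewrite -ltr_sqr ?nnegrE // ltW.
Qed.

Lemma exists_nearest_point :
  exists2 l, Z l & forall z, Z z -> `|u - l| ^+ 2 <= `|u - z| ^+ 2.
Proof.
have [zs hzs] := choice dist2_approx.
have Zzs n : Z (zs n) by case: (hzs n).
have zs_cvg := minimizing_cvg Zzs (fun n => (hzs n).2).
exists (lim (zs @ \oo)).
  by apply: (closed_cvg _ Zcl _ _ zs_cvg); apply: nearW.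
move=> z Zz; apply: le_trans (dist2_le Zz).
have dist_cvg : (fun n => `|u - zs n| ^+ 2) @ \oo --> `|u - lim (zs @ \oo)| ^+ 2.
  have norm_cvg : (fun n => `|u - zs n|) @ \oo --> `|u - lim (zs @ \oo)|.
    by apply: cvg_norm; apply: cvgB => //; exact: cvg_cst.
  by under eq_fun do rewrite expr2; rewrite expr2; apply: cvgM.
have bound_cvg : (fun n : nat => dist2 + n.+1%:R^-1) @ \oo --> dist2.
  rewrite -[X in _ --> X]addr0; apply: cvgD; first exact: cvg_cst.
  exact: cvg_harmonic.
by apply: (ler_cvg_to dist_cvg bound_cvg); apply: nearW => n; exact/ltW/(hzs n).2.
Qed.

Lemma nearest_point_orthogonal l : Z l ->
  (forall z, Z z -> `|u - l| ^+ 2 <= `|u - z| ^+ 2) ->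
  forall z, Z z -> ip (u - l) z = 0.
Proof.
case: Zsub => _ ZD ZZ Zl hl z Zz.
apply: (quadratic_ge0_coef1_eq0 (sqr_ge0 `|z|)) => t.
have := hl _ (ZD _ _ Zl (ZZ t _ Zz)).
by rewrite opprD addrA (normBZ_sqr hip); lra.
Qed.

Lemma orthogonal_projection :
  exists2 z, Z z & forall z', Z z' -> ip (u - z) z' = 0.
Proof.
have [l Zl hl] := exists_nearest_point.
by exists l => //; exact: nearest_point_orthogonal.
Qed.

End OrthogonalProjection.

Section ClosedHilbertComplex.
Variables (R : realType) (C : hcomplex R).
Hypothesis HC : closed_hilbert_complex C.

Lemma hc_ip_inner k : is_inner_product (hc_ip C (k:=k)).
Proof. by case: (HC k). Qed.

Lemma hc_dom_subspace k : is_subspace (hc_dom C k).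
Proof. by case: (HC k). Qed.

Lemma hc_dom0 k : hc_dom C k 0.
Proof. by case: (hc_dom_subspace k). Qed.

Lemma hc_domB k x y : hc_dom C k x -> hc_dom C k y -> hc_dom C k (x - y).
Proof.
case: (hc_dom_subspace k) => _ domD domZ dx dy.
by rewrite -scaleN1r; apply: domD => //; apply: domZ.
Qed.

Lemma hc_dom_d k (x : hc_W C k) : hc_dom C k x -> hc_dom C k.+1 (hc_d C x).
Proof. by case: (HC k) => _ _ [_ _ _ [h _ _]]; apply: h. Qed.

Lemma hc_dd k (x : hc_W C k) : hc_dom C k x -> hc_d C (hc_d C x) = 0.
Proof. by case: (HC k) => _ _ [_ _ _ [_ h _]]; apply: h. Qed.

Lemma hc_d_lin k (a : R) (x y : hc_W C k) : hc_dom C k x -> hc_dom C k y ->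
  hc_d C (a *: x + y) = a *: hc_d C x + hc_d C y.
Proof. by case: (HC k) => _ _ [h _ _ _]; apply: h. Qed.

Lemma hc_d0 k : hc_d C (0 : hc_W C k) = 0.
Proof.
have := hc_d_lin (-1) (hc_dom0 k) (hc_dom0 k).
by rewrite scaler0 add0r scaleN1r addNr.
Qed.

Lemma hc_dZ k (a : R) (x : hc_W C k) : hc_dom C k x ->
  hc_d C (a *: x) = a *: hc_d C x.
Proof. by move=> dx; have := hc_d_lin a dx (hc_dom0 k); rewrite !addr0 hc_d0 addr0. Qed.

Lemma hc_dB k (x y : hc_W C k) : hc_dom C k x -> hc_dom C k y ->
  hc_d C (x - y) = hc_d C x - hc_d C y.
Proof. by move=> dx dy; rewrite -scaleN1r addrC hc_d_lin // scaleN1r addrC. Qed.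

Lemma Vip_norm k (x : hc_W C k) : Vip x x = `|x| ^+ 2 + `|hc_d C x| ^+ 2.
Proof. by rewrite /Vip !(ip_norm (hc_ip_inner _)). Qed.

Lemma Vnorm_ge0 k (x : hc_W C k) : 0 <= Vnorm x.
Proof. exact: sqrtr_ge0. Qed.

Lemma Vnorm_eq0 k (x : hc_W C k) : Vnorm x = 0 -> x = 0.
Proof.
move=> /eqP; rewrite /Vnorm sqrtr_eq0 Vip_norm => h.
have h1 := sqr_ge0 `|x|; have h2 := sqr_ge0 `|hc_d C x|.
have : `|x| ^+ 2 = 0 by lra.
by move/eqP; rewrite sqrf_eq0 normr_eq0 => /eqP.
Qed.

Lemma Vnorm0 k : Vnorm (0 : hc_W C k) = 0.
Proof. by rewrite /Vnorm Vip_norm hc_d0 !normr0 expr0n /= addr0 sqrtr0. Qed.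

Lemma VnormZ k (a : R) (x : hc_W C k) : hc_dom C k x ->
  Vnorm (a *: x) = `|a| * Vnorm x.
Proof.
move=> dx; rewrite /Vnorm !Vip_norm hc_dZ // !normrZ !exprMn -mulrDr.
by rewrite sqrtrM ?sqr_ge0 // sqrtr_sqr normr_id.
Qed.

Lemma Vnorm_ker k (y : hc_W C k) : hc_d C y = 0 -> Vnorm y = `|y|.
Proof.
by move=> dy; rewrite /Vnorm Vip_norm dy normr0 expr0n /= addr0 sqrtr_sqr normr_id.
Qed.

Lemma Vnorm_le_subr_orth k (x e : hc_W C k) : hc_dom C k x -> hc_dom C k e ->
  Vip x e = 0 -> Vnorm x <= Vnorm (x - e).
Proof.
move=> dx de xe; rewrite /Vnorm ler_sqrt; last by rewrite Vip_norm addr_ge0 ?sqr_ge0.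
rewrite !Vip_norm hc_dB //.
have := normBZ_sqr (hc_ip_inner k) x e 1.
have := normBZ_sqr (hc_ip_inner k.+1) (hc_d C x) (hc_d C e) 1.
rewrite !scale1r => -> ->; move: xe; rewrite /Vip.
have := sqr_ge0 `|e|; have := sqr_ge0 `|hc_d C e|; lra.
Qed.

Lemma Zk_subspace k : is_subspace (Zk C k).
Proof.
case: (hc_dom_subspace k) => dom0 domD domZ.
split; first by split; [exact: dom0 | exact: hc_d0].
  move=> x y [dx dx0] [dy dy0]; split; first exact: domD.
  by have := hc_d_lin 1 dx dy; rewrite !scale1r dx0 dy0 addr0.
by move=> a x [dx dx0]; split; [exact: domZ | rewrite hc_dZ // dx0 scaler0].
Qed.

Lemma Zk_closed k : closed (Zk C k).
Proof.
case: (HC k) => _ _ [_ _ graph_closed _].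
have -> : Zk C k = (fun x => (x, 0 : hc_W C k.+1)) @^-1`
   [set xy : (hc_W C k * hc_W C k.+1)%type | hc_dom C k xy.1 /\ xy.2 = hc_d C xy.1].
  by apply/seteqP; split => x /= [h1 h2]; split.
apply: preimage_closed => // x _.
by apply: cvg_pair; [exact: cvg_id | exact: cvg_cst].
Qed.

Lemma Zperp_decomposition k (u : hc_W C k) : hc_dom C k u ->
  exists2 w, Zperp C k w & hc_d C w = hc_d C u.
Proof.
move=> du.
have [z [dz dz0] hz] :=
  orthogonal_projection (hc_ip_inner k) (Zk_subspace k) (Zk_closed (k:=k)) u.
exists (u - z); last by rewrite hc_dB // dz0 subr0.
split=> [|z' Zz']; first exact: hc_domB.
by rewrite /Vip hz // Zz'.2 (ip0r (hc_ip_inner _)) addr0.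
Qed.

Lemma Zperp_Vnorm_min k (v x : hc_W C k) : Zperp C k v -> hc_dom C k x ->
  hc_d C x = hc_d C v -> Vnorm v <= Vnorm x.
Proof.
move=> [dv vperp] dx dxv.
have dvx : hc_dom C k (v - x) by exact: hc_domB.
have Zvx : Zk C k (v - x) by split; rewrite // hc_dB // dxv subrr.
have := Vnorm_le_subr_orth dv dvx (vperp _ Zvx).
by rewrite opprB addrC subrK.
Qed.

End ClosedHilbertComplex.

Section DomainComplexMorphism.
Variables (R : realType) (C C' : hcomplex R) (f : forall k, hc_W C k -> hc_W C' k).
Arguments f : clear implicits.
Hypotheses (HC : closed_hilbert_complex C) (HC' : closed_hilbert_complex C')
  (hf : dc_morphism f).

Lemma morph0 k : f k 0 = 0.
Proof.
case: (hf k) => _ flin _ _.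
have := flin (-1) 0 0 (hc_dom0 HC k) (hc_dom0 HC k).
by rewrite scaler0 add0r scaleN1r addNr.
Qed.

Lemma morphZ k (a : R) x : hc_dom C k x -> f k (a *: x) = a *: f k x.
Proof.
case: (hf k) => _ flin _ _ dx.
by have := flin a x 0 dx (hc_dom0 HC k); rewrite !addr0 morph0 addr0.
Qed.

Let image_ball k := [set Vnorm (f k v) | v in [set v | hc_dom C k v /\ Vnorm v <= 1]].

Let image_ball_ub k : has_ubound (image_ball k).
Proof.
case: (hf k) => _ _ [M hM] _.
exists `|M| => _ [x [dx x1] <-].
apply: le_trans (hM x dx) _.
have := Vnorm_ge0 x; have := ler_norm M; have := normr_ge0 M; nra.
Qed.

Lemma opnorm_ge0 k : 0 <= opnorm f k.
Proof.
have f0_in : image_ball k (Vnorm (f k 0)).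
  by exists 0 => //; split; [exact: hc_dom0 | rewrite Vnorm0].
exact: le_trans (Vnorm_ge0 _) (ub_le_sup (image_ball_ub k) f0_in).
Qed.

Lemma Vnorm_morph_le k v : hc_dom C k v -> Vnorm (f k v) <= opnorm f k * Vnorm v.
Proof.
move=> dv; case: (hf k) => fdom _ [M hM] _.
have [v0|v_neq0] := eqVneq (Vnorm v) 0.
  by have := hM v dv; rewrite v0 !mulr0.
have v_gt0 : 0 < Vnorm v by rewrite lt_def v_neq0 Vnorm_ge0.
pose v' := (Vnorm v)^-1 *: v.
have dv' : hc_dom C k v' by case: (hc_dom_subspace HC k) => _ _; apply.
have v'_in : image_ball k (Vnorm (f k v')).
  exists v' => //; split => //.
  by rewrite VnormZ // ger0_norm ?invr_ge0 ?(ltW v_gt0) // mulVf.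
have := ub_le_sup (image_ball_ub k) v'_in.
rewrite morphZ // (VnormZ HC' _ (fdom _ dv)) ger0_norm ?invr_ge0 ?(ltW v_gt0) //.
by rewrite ler_pdivrMl // mulrC.
Qed.

End DomainComplexMorphism.

(* For cP < 0 the hypotheses force b = 0, whence n = 0 and both sides vanish. *)
Lemma poincare_chain_le (R : realDomainType) (cP P I m a b n : R) :
  0 <= P -> 0 <= I -> 0 <= a -> 0 <= b -> (b = 0 -> n = 0) ->
  m <= P * a -> a <= cP * b -> b <= I * n -> m <= cP * P * I * n.
Proof.
move=> P0 I0 a0 b0 bn mPa acb bIn.
have [cP0|cP_lt0] := leP 0 cP.
  apply: le_trans mPa _; rewrite -mulrA -mulrA mulrCA ler_wpM2l //.
  by apply: le_trans acb _; rewrite ler_wpM2l.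
have b_eq0 : b = 0 by nra.
rewrite (bn b_eq0) mulr0; apply: le_trans mPa _.
by rewrite b_eq0 mulr0 in acb; exact: mulr_ge0_le0.
Qed.

Theorem mainTheorem5 (R : realType) (C Ch : hcomplex R)
  (ih : forall k, hc_W Ch k -> hc_W C k)
  (pih : forall k, hc_W C k -> hc_W Ch k)
  (k : nat) (cP : R) :
  closed_hilbert_complex C ->
  closed_hilbert_complex Ch ->
  dc_morphism ih ->
  dc_morphism pih ->
  (forall j (vh : hc_W Ch j), hc_dom Ch j vh -> pih j (ih j vh) = vh) ->
  (forall v : hc_W C k, Zperp C k v -> Vnorm v <= cP * Vnorm (hc_d C v)) ->
  forall vh : hc_W Ch k, Zperp Ch k vh ->
    Vnorm vh <= cP * opnorm pih k * opnorm ih k.+1 * `|hc_d Ch vh|.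
Proof.
move=> HC HCh hi hp hpi poincare vh vh_perp.
have dvh := vh_perp.1; set y := hc_d Ch vh.
have [idom _ _ icom] := hi k; have [pdom _ _ pcom] := hp k.
have dy : hc_dom Ch k.+1 y by exact: hc_dom_d.
have [w w_perp dw] := Zperp_decomposition HC (idom _ dvh).
rewrite icom // -/y in dw.
have dpw : hc_d Ch (pih k w) = y by rewrite pcom ?dw ?hpi //; case: w_perp.
apply: (poincare_chain_le (opnorm_ge0 HC hp k) (opnorm_ge0 HCh hi k.+1)
  (Vnorm_ge0 w) (Vnorm_ge0 (hc_d C w))) (poincare _ w_perp) _.
- move=> /(Vnorm_eq0 HC); rewrite dw => ihy0.
  by rewrite -(hpi _ y dy) ihy0 (morph0 HC hp) normr0.
- apply: le_trans (Vnorm_morph_le HC HCh hp w_perp.1).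
  by apply: Zperp_Vnorm_min vh_perp (pdom _ w_perp.1) dpw.
- by rewrite dw -(Vnorm_ker HCh (hc_dd HCh dvh)); exact: Vnorm_morph_le.
Qed.
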